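(* Let $a,b,c\in\mathbb{C}^*$ satisfy $a,b,c,a/b,a/c,b/c\notin q^{\mathbb{Z}}$ and $$q^{\mathbb{Z}}a\cup q^{\mathbb{Z}}b\cup q^{\mathbb{Z}}\tfrac{aq}{c}\cup q^{\mathbb{Z}}\tfrac{bq}{c}=q^{\mathbb{Z}}a\cup(-q^{\mathbb{Z}}a)\cup q^{\mathbb{Z}+1/2}a\cup(-q^{\mathbb{Z}+1/2}a).$$ Let $A,B,C,D\in\mathbb{C}$ and $n,m,l,k,N,M,L,K\in\mathbb{Z}$ be such that $$Az^{n/2}\theta_q(q^Naz)+Bz^{m/2}\theta_q(-q^Maz)+Cz^{l/2}\theta_q(q^Lq^{1/2}az)+Dz^{k/2}\theta_q(-q^Kq^{1/2}az)=0$$ identically (as multivalued meromorphic functions of $z\in\mathbb{C}^*$, with $z^{j/2}$ a determination of $e^{\frac{j}{2}\log z}$). Then $A=B=C=D=0$.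
   Context: $q\in\mathbb{C}$ with $0<|q|<1$; fix $\tau$ with $q=e^{-2\pi i\tau}$ and put $q^y:=e^{-2\pi i\tau y}$ (so $q^{1/2}=e^{-\pi i\tau}$); $q^X=\{q^x:x\in X\}$. $(x;q)_\infty=\prod_{j\ge0}(1-xq^j)$ and $\theta_q(z)=(q;q)_\infty(z;q)_\infty(q/z;q)_\infty$ is the Jacobi theta function, meromorphic (holomorphic) on $\mathbb{C}^*$, with $\theta_q(qz)=-z^{-1}\theta_q(z)$. *)

From Stdlib Require Import Reals.
From Coquelicot Require Import Coquelicot.

Open Scope C_scope.

Definition Cexp (w : C) : C :=
  (RtoC (exp (Re w)) * (RtoC (cos (Im w)) + Ci * RtoC (sin (Im w))))%C.

Definition qpow (tau : C) (y : R) : C :=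
  Cexp ((- (RtoC 2) * RtoC PI * Ci * tau * RtoC y))%C.

Fixpoint Cpown (x : C) (n : nat) : C :=
  match n with O => 1 | S k => (Cpown x k * x)%C end.

Fixpoint qpoch_part (x q : C) (n : nat) : C :=
  match n with O => 1 | S k => (qpoch_part x q k * (1 - x * Cpown q k))%C end.

Definition qpoch (x q : C) : C :=
  @lim C_CompleteNormedModule (filtermap (qpoch_part x q) eventually).

Definition theta (q z : C) : C :=
  (qpoch q q * qpoch z q * qpoch (q / z) q)%C.

Definition in_qZ (tau : C) (x a : C) : Prop :=
  exists j : Z, x = (qpow tau (IZR j) * a)%C.
Definition in_qZhalf (tau : C) (x a : C) : Prop :=
  exists j : Z, x = (qpow tau (IZR j + /2) * a)%C.

From Stdlib Require Import Reals Lra Lia.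
From Coquelicot Require Import Coquelicot.
Open Scope C_scope.

(* Put z = e^w.  Each of the four terms E z^(j/2) theta_q(s q^nu a z), with s = +-1, is a
   joint eigenfunction of f |-> f(w + log q) e^w and f |-> f(w + 2 pi i): by
   theta_q(q y) = -theta_q(y)/y the first acts as multiplication by -q^(j/2)/(s q^nu a), and
   the second as multiplication by (-1)^j.  Two terms with the same pair of eigenvalues have
   the same sign s and exponents nu differing by an integer, which does not happen for
   q^N a, -q^M a, q^(L+1/2) a, -q^(K+1/2) a.  Joint eigenfunctions with distinct
   characters are linearly independent, so each term vanishes identically; as theta_q has no
   zero on the annulus |q| < |y| < 1, each coefficient is 0. *)

Lemma Cmult_reg_r (x y z : C) : z <> 0 -> x * z = y * z -> x = y.
Proof.
  intros hz E. replace x with (x * z / z) by (field; exact hz).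
  rewrite E. field. exact hz.
Qed.

Lemma pow_le_one (r : R) (n : nat) : (0 <= r <= 1)%R -> (r ^ n <= 1)%R.
Proof. intro hr. rewrite <- (pow1 n). apply pow_incr. lra. Qed.

Lemma Cmod_Cpown (x : C) (n : nat) : Cmod (Cpown x n) = (Cmod x ^ n)%R.
Proof. induction n as [|n IHn]; simpl; [apply Cmod_1|]. rewrite Cmod_mult, IHn. ring. Qed.

Lemma exp_le (x y : R) : (x <= y)%R -> (exp x <= exp y)%R.
Proof.
  intros [H|H]; [left; now apply exp_increasing|right; now subst].
Qed.

Lemma exp_neg_le_one_sub (t : R) : (0 <= t < 1)%R -> (exp (- (t / (1 - t))) <= 1 - t)%R.
Proof.
  intro ht. rewrite exp_Ropp.
  pose proof (exp_ineq1_le (t / (1 - t))) as He. pose proof (exp_pos (t / (1 - t))).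
  apply Rmult_le_reg_l with (exp (t / (1 - t))); [lra|].
  rewrite Rinv_r by lra.
  replace (1 + t / (1 - t))%R with (/ (1 - t))%R in He by (field; lra).
  apply Rmult_le_reg_r with (/ (1 - t))%R; [apply Rinv_0_lt_compat; lra|].
  rewrite Rmult_assoc, Rinv_r, Rmult_1_l, Rmult_1_r by lra. exact He.
Qed.

Lemma Cmod_sub_lt_ball (x y : C) (eps : R) :
  (Cmod (y - x) < eps)%R -> @ball C_UniformSpace x eps y.
Proof. exact (norm_compat1 (V := C_NormedModule) x y eps). Qed.

Lemma filterlim_Cmod (u : nat -> C) (l : C) :
  filterlim u eventually (locally l) <->
  forall eps : posreal, eventually (fun n => (Cmod (u n - l) < eps)%R).
Proof. exact (filterlim_locally_ball_norm (U := C_NormedModule) u l). Qed.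

Lemma lim_neq0_of_Cmod_ge (u : nat -> C) (l : C) (d : R) :
  (0 < d)%R -> (forall n, d <= Cmod (u n))%R ->
  filterlim u eventually (locally l) -> l <> 0.
Proof.
  intros hd hu hl ->.
  destruct (proj1 (filterlim_Cmod u 0) hl (mkposreal d hd)) as [N HN].
  specialize (HN N (le_n N)); specialize (hu N). simpl in HN.
  replace (u N - 0) with (u N) in HN by ring. lra.
Qed.

Section GeometricSteps.

Variables (u : nat -> C) (K r : R).
Hypothesis hr : (0 <= r < 1)%R.
Hypothesis hstep : forall n, (Cmod (u (S n) - u n) <= K * r ^ n)%R.

Lemma geometric_steps_tail n k :
  (Cmod (u (n + k) - u n) <= K * r ^ n * (1 - r ^ k) / (1 - r))%R.
Proof.
  induction k as [|k IHk].
  - rewrite Nat.add_0_r. replace (u n - u n) with (RtoC 0) by ring. rewrite Cmod_0. simpl. lra.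
  - replace (u (n + S k) - u n) with ((u (S (n + k)) - u (n + k)) + (u (n + k) - u n))
      by (rewrite Nat.add_succ_r; ring).
    eapply Rle_trans; [apply Cmod_triangle|].
    pose proof (hstep (n + k)) as Hs. rewrite pow_add in Hs.
    replace (K * r ^ n * (1 - r ^ S k) / (1 - r))%R
      with (K * (r ^ n * r ^ k) + K * r ^ n * (1 - r ^ k) / (1 - r))%R
      by (simpl; field; lra).
    lra.
Qed.

Lemma geometric_steps_cvg :
  filterlim u eventually (locally (@lim C_CompleteNormedModule (filtermap u eventually))).
Proof.
  apply filterlim_locally; intro eps.
  apply (@complete_cauchy C_CompleteNormedModule (filtermap u eventually));
    [apply filtermap_proper_filter, eventually_filter|].
  intro e.
  assert (HK : (0 <= K)%R)
    by (specialize (hstep 0); simpl in hstep; pose proof (Cmod_ge_0 (u 1%nat - u 0%nat)); lra).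
  assert (He : (0 < e * (1 - r) / (K + 1))%R)
    by (apply Rdiv_lt_0_compat; [apply Rmult_lt_0_compat; [apply cond_pos|]|]; lra).
  destruct (pow_lt_1_zero r ltac:(rewrite Rabs_pos_eq; lra) _ He) as [N HN].
  exists (u N), N; intros n Hn.
  apply Cmod_sub_lt_ball.
  replace n with (N + (n - N))%nat by lia.
  eapply Rle_lt_trans; [apply geometric_steps_tail|].
  specialize (HN N (le_n N)). rewrite Rabs_pos_eq in HN by (apply pow_le; lra).
  pose proof (pow_le r (n - N) ltac:(lra)). pose proof (pow_le_one r (n - N) ltac:(lra)).
  pose proof (pow_le r N ltac:(lra)).
  apply Rmult_lt_reg_r with (1 - r)%R; [lra|].
  unfold Rdiv; rewrite Rmult_assoc, Rinv_l, Rmult_1_r by lra.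
  apply Rmult_lt_compat_r with (r := (K + 1)%R) in HN; [|lra].
  unfold Rdiv in HN; rewrite Rmult_assoc, Rinv_l, Rmult_1_r in HN by lra.
  assert (0 <= K * r ^ N * r ^ (n - N))%R by (repeat apply Rmult_le_pos; lra).
  nra.
Qed.

End GeometricSteps.

Section QPochhammer.

Variable q : C.
Hypothesis hq : (Cmod q < 1)%R.

Lemma qpoch_part_le x n : (Cmod (qpoch_part x q n) <= exp (Cmod x / (1 - Cmod q)))%R.
Proof.
  pose proof (Cmod_ge_0 q) as hq0.
  enough (H : (Cmod (qpoch_part x q n) <= exp (Cmod x * (1 - Cmod q ^ n) / (1 - Cmod q)))%R).
  { eapply Rle_trans; [exact H|]. apply exp_le. pose proof (Cmod_ge_0 x).
    pose proof (pow_le (Cmod q) n hq0). unfold Rdiv.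
    apply Rmult_le_compat_r; [left; apply Rinv_0_lt_compat; lra|].
    assert (0 <= Cmod x * Cmod q ^ n)%R by (apply Rmult_le_pos; lra). nra. }
  induction n as [|n IHn]; simpl.
  - rewrite Cmod_1, Rminus_diag, Rmult_0_r, Rdiv_0_l, exp_0. lra.
  - rewrite Cmod_mult.
    assert (H1 : (Cmod (1 - x * Cpown q n) <= 1 + Cmod x * Cmod q ^ n)%R).
    { unfold Cminus. eapply Rle_trans; [apply Cmod_triangle|].
      rewrite Cmod_opp, Cmod_1, Cmod_mult, Cmod_Cpown. lra. }
    replace (Cmod x * (1 - Cmod q * Cmod q ^ n) / (1 - Cmod q))%R
      with (Cmod x * (1 - Cmod q ^ n) / (1 - Cmod q) + Cmod x * Cmod q ^ n)%R
      by (field; lra).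
    rewrite exp_plus. pose proof (exp_ineq1_le (Cmod x * Cmod q ^ n)).
    apply Rmult_le_compat; try apply Cmod_ge_0; lra.
Qed.

Lemma qpoch_part_ge x n : (Cmod x < 1)%R ->
  (exp (- (Cmod x / ((1 - Cmod q) * (1 - Cmod x)))) <= Cmod (qpoch_part x q n))%R.
Proof.
  intro hx. pose proof (Cmod_ge_0 q) as hq0. pose proof (Cmod_ge_0 x) as hx0.
  set (K := (Cmod x / ((1 - Cmod q) * (1 - Cmod x)))%R).
  enough (H : (exp (- (K * (1 - Cmod q ^ n))) <= Cmod (qpoch_part x q n))%R).
  { eapply Rle_trans; [|exact H]. apply exp_le.
    assert (0 <= K)%R by (apply Rdiv_le_0_compat; [|apply Rmult_lt_0_compat]; lra).
    pose proof (pow_le (Cmod q) n hq0). nra. }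
  induction n as [|n IHn]; simpl.
  - rewrite Cmod_1, Rminus_diag, Rmult_0_r, Ropp_0, exp_0. lra.
  - rewrite Cmod_mult.
    set (t := (Cmod x * Cmod q ^ n)%R).
    assert (ht : (0 <= t <= Cmod x)%R).
    { pose proof (pow_le (Cmod q) n hq0). pose proof (pow_le_one (Cmod q) n ltac:(lra)).
      unfold t; split; [apply Rmult_le_pos|]; nra. }
    assert (H1 : (1 - t <= Cmod (1 - x * Cpown q n))%R).
    { pose proof (Cmod_triangle (1 - x * Cpown q n) (x * Cpown q n)) as Ht.
      replace (1 - x * Cpown q n + x * Cpown q n) with (RtoC 1) in Ht by ring.
      rewrite Cmod_1, Cmod_mult, Cmod_Cpown in Ht. unfold t. lra. }
    assert (H2 : (exp (- (t / (1 - Cmod x))) <= exp (- (t / (1 - t))))%R).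
    { apply exp_le, Ropp_le_contravar. unfold Rdiv.
      apply Rmult_le_compat_l; [lra|]. apply Rinv_le_contravar; lra. }
    pose proof (exp_neg_le_one_sub t ltac:(lra)).
    replace (- (K * (1 - Cmod q * Cmod q ^ n)))%R
      with (- (K * (1 - Cmod q ^ n)) + - (t / (1 - Cmod x)))%R
      by (unfold K, t; field; lra).
    rewrite exp_plus. apply Rmult_le_compat; try (left; apply exp_pos); lra.
Qed.

Lemma qpoch_part_cvg x : filterlim (qpoch_part x q) eventually (locally (qpoch x q)).
Proof.
  apply (geometric_steps_cvg _ (exp (Cmod x / (1 - Cmod q)) * Cmod x) (Cmod q)).
  { pose proof (Cmod_ge_0 q); lra. }
  intro n. simpl.
  replace (qpoch_part x q n * (1 - x * Cpown q n) - qpoch_part x q n)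
    with (- (qpoch_part x q n * x * Cpown q n)) by ring.
  rewrite Cmod_opp, !Cmod_mult, Cmod_Cpown.
  apply Rmult_le_compat_r; [apply pow_le, Cmod_ge_0|].
  apply Rmult_le_compat_r; [apply Cmod_ge_0|]. apply qpoch_part_le.
Qed.

Lemma qpoch_part_succ x n : qpoch_part x q (S n) = (1 - x) * qpoch_part (q * x) q n.
Proof.
  induction n as [|n IHn]; [simpl; ring|].
  change (qpoch_part x q (S (S n))) with (qpoch_part x q (S n) * (1 - x * Cpown q (S n))).
  rewrite IHn. simpl. ring.
Qed.

Lemma qpoch_succ x : qpoch x q = (1 - x) * qpoch (q * x) q.
Proof.
  apply (@filterlim_locally_unique nat C_AbsRing C_NormedModule eventually
           (Proper_StrongProper _ eventually_filter) (fun n => qpoch_part x q (S n))).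
  - eapply filterlim_comp; [apply eventually_subseq; intro n; lia|apply qpoch_part_cvg].
  - apply (filterlim_ext (fun n => (1 - x) * qpoch_part (q * x) q n)).
    { intro n; symmetry; apply qpoch_part_succ. }
    eapply filterlim_comp; [apply qpoch_part_cvg|].
    exact (filterlim_scal_r (V := C_NormedModule) (1 - x) (qpoch (q * x) q)).
Qed.

Lemma qpoch_neq0 x : (Cmod x < 1)%R -> qpoch x q <> 0.
Proof.
  intro hx. eapply lim_neq0_of_Cmod_ge; [apply exp_pos| |apply qpoch_part_cvg].
  intro n. now apply qpoch_part_ge.
Qed.

End QPochhammer.

Lemma theta_mul_q (q x : C) : (Cmod q < 1)%R -> q <> 0 -> x <> 0 ->
  theta q (q * x) = - / x * theta q x.
Proof.
  intros hq hq0 hx. unfold theta.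
  replace (q / (q * x)) with (/ x) by (field; split; assumption).
  rewrite (qpoch_succ q hq (/ x)), (qpoch_succ q hq x).
  unfold Cdiv. field. exact hx.
Qed.

Lemma theta_neq0 (q y : C) : (Cmod q < Cmod y)%R -> (Cmod y < 1)%R -> theta q y <> 0.
Proof.
  intros hqy hy. pose proof (Cmod_ge_0 q).
  assert (hy0 : y <> 0) by (intros ->; rewrite Cmod_0 in hqy; lra).
  assert (hqy' : (Cmod (q / y) < 1)%R).
  { rewrite Cmod_div by exact hy0. apply Rlt_div_l; [lra|]. lra. }
  unfold theta. repeat apply Cmult_neq_0; apply qpoch_neq0; lra.
Qed.

Lemma Cexp_add (u v : C) : Cexp (u + v) = Cexp u * Cexp v.
Proof.
  unfold Cexp. apply injective_projections; simpl; unfold Re, Im;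
    rewrite exp_plus, cos_plus, sin_plus; ring.
Qed.

Lemma Cmod_Cexp (w : C) : Cmod (Cexp w) = exp (Re w).
Proof.
  unfold Cexp. rewrite Cmod_mult, Cmod_R, Rabs_pos_eq by (left; apply exp_pos).
  replace (Cmod (RtoC (cos (Im w)) + Ci * RtoC (sin (Im w)))) with 1%R; [ring|].
  pose proof (sin2_cos2 (Im w)) as H. unfold Rsqr in H.
  unfold Cmod; simpl.
  match goal with |- (_ = sqrt ?e)%R => replace e with 1%R by nra end.
  symmetry; apply sqrt_1.
Qed.

Lemma Cexp_neq0 (w : C) : Cexp w <> 0.
Proof.
  intro H. pose proof (exp_pos (Re w)).
  rewrite <- Cmod_Cexp, H, Cmod_0 in *. lra.
Qed.

Definition Ci2PI : C := RtoC (2 * PI) * Ci.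

Definition sign (b : bool) : C := if b then 1 else Copp 1.

Lemma sign_inj (b b' : bool) : sign b = sign b' -> b = b'.
Proof.
  destruct b, b'; simpl; intro H; try reflexivity;
    apply (f_equal fst) in H; simpl in H; lra.
Qed.

Lemma Cmod_sign (b : bool) : Cmod (sign b) = 1%R.
Proof. destruct b; unfold sign; [|rewrite Cmod_opp]; apply Cmod_1. Qed.

Lemma sign_neq0 (b : bool) : sign b <> 0.
Proof. intro H. apply (f_equal Cmod) in H. rewrite Cmod_sign, Cmod_0 in H. lra. Qed.

Lemma cos_IZR_mult_PI (j : Z) : cos (IZR j * PI) = if Z.even j then 1%R else (-1)%R.
Proof.
  assert (Heven : forall z, cos (IZR (2 * z) * PI) = 1%R).
  { intro z. rewrite mult_IZR, Rmult_assoc, cos_2a_sin, sin_eq_0_1 by (now exists z). ring. }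
  destruct (Z.Even_or_Odd j) as [[z ->]|[z ->]].
  - rewrite Z.even_even. apply Heven.
  - rewrite Z.even_odd, plus_IZR, Rmult_plus_distr_r, Rmult_1_l, neg_cos, Heven. ring.
Qed.

Lemma Cexp_half_int_2PI_i (j : Z) : Cexp (RtoC (IZR j / 2) * Ci2PI) = sign (Z.even j).
Proof.
  unfold Cexp, Ci2PI.
  replace (Re (RtoC (IZR j / 2) * (RtoC (2 * PI) * Ci))) with 0%R
    by (unfold Re; simpl; ring).
  replace (Im (RtoC (IZR j / 2) * (RtoC (2 * PI) * Ci))) with (IZR j * PI)%R
    by (unfold Im; simpl; field).
  rewrite exp_0, sin_eq_0_1 by (now exists j). rewrite cos_IZR_mult_PI.
  destruct (Z.even j); apply injective_projections; simpl; ring.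
Qed.

Lemma Cexp_add_2PI_i (w : C) : Cexp (w + Ci2PI) = Cexp w.
Proof.
  replace Ci2PI with (RtoC (IZR 2 / 2) * Ci2PI)
    by (unfold Ci2PI; apply injective_projections; simpl; field).
  rewrite Cexp_add, Cexp_half_int_2PI_i. simpl. ring.
Qed.

Definition qlog (tau : C) : C := - RtoC 2 * RtoC PI * Ci * tau.

Lemma qpow_Cexp (tau : C) (y : R) : qpow tau y = Cexp (RtoC y * qlog tau).
Proof. unfold qpow, qlog. f_equal. ring. Qed.

Lemma qpow_add (tau : C) (x y : R) : qpow tau (x + y) = qpow tau x * qpow tau y.
Proof. rewrite !qpow_Cexp, <- Cexp_add, RtoC_plus. f_equal. ring. Qed.

Lemma qpow_neq0 (tau : C) (y : R) : qpow tau y <> 0.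
Proof. rewrite qpow_Cexp. apply Cexp_neq0. Qed.

Lemma Cmod_qpow (tau : C) (y : R) : Cmod (qpow tau y) = exp (2 * PI * Im tau * y).
Proof. rewrite qpow_Cexp, Cmod_Cexp. f_equal. unfold qlog, Re, Im. simpl. ring. Qed.

Lemma qpow_signed_inj (tau : C) (b b' : bool) (x y : R) : (Cmod (qpow tau 1) < 1)%R ->
  sign b * qpow tau x = sign b' * qpow tau y -> b = b' /\ x = y.
Proof.
  intros hq E.
  assert (Exy : x = y).
  { apply (f_equal Cmod) in E. rewrite !Cmod_mult, !Cmod_sign, !Rmult_1_l, !Cmod_qpow in E.
    rewrite Cmod_qpow, Rmult_1_r, <- exp_0 in hq. apply exp_lt_inv in hq.
    apply exp_inv, Rmult_eq_reg_l in E; lra. }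
  subst y. split; [|reflexivity].
  apply sign_inj, (Cmult_reg_r _ _ _ (qpow_neq0 tau x) E).
Qed.

Lemma qpow_one (tau : C) : qpow tau 1 = Cexp (qlog tau).
Proof. rewrite qpow_Cexp. f_equal. ring. Qed.

Section JointEigenfunctions.

Variables (s t : C) (h : C -> C).

Definition joint_eigen (l e : C) (f : C -> C) : Prop :=
  (forall w, f (w + s) * h w = l * f w) /\ (forall w, f (w + t) = e * f w).

(* The eigenvalue, on a joint eigenfunction with character [(l, e)], of the operator
   [(S - l') (T + e') + (T - e')] where [S f = f (. + s) * h] and [T f = f (. + t)]. *)
Definition annihilator (l e l' e' : C) : C := (l - l') * (e + e') + (e - e').

Lemma annihilator_self (l e : C) : annihilator l e l e = 0.
Proof. unfold annihilator. ring. Qed.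

Lemma annihilator_neq0 (l l' : C) (b b' : bool) :
  (l, sign b) <> (l', sign b') -> annihilator l (sign b) l' (sign b') <> 0.
Proof.
  intros Hne H0. apply Hne. destruct l as [x y], l' as [x' y'].
  pose proof (f_equal fst H0) as Hre; pose proof (f_equal snd H0) as Him.
  destruct b, b'; unfold annihilator, sign in *; simpl in Hre, Him;
    first [do 2 f_equal; lra | exfalso; lra].
Qed.

Variables (f1 f2 f3 f4 : C -> C) (l1 l2 l3 l4 e1 e2 e3 e4 : C).
Hypotheses (hf1 : joint_eigen l1 e1 f1) (hf2 : joint_eigen l2 e2 f2)
  (hf3 : joint_eigen l3 e3 f3) (hf4 : joint_eigen l4 e4 f4).

Definition combination_eq0 (c1 c2 c3 c4 : C) : Prop :=
  forall w, c1 * f1 w + c2 * f2 w + c3 * f3 w + c4 * f4 w = 0.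

Lemma combination_eq0_shift (c1 c2 c3 c4 : C) :
  combination_eq0 c1 c2 c3 c4 -> combination_eq0 (c1 * l1) (c2 * l2) (c3 * l3) (c4 * l4).
Proof.
  destruct hf1 as [S1 _], hf2 as [S2 _], hf3 as [S3 _], hf4 as [S4 _].
  intros Hc w.
  transitivity (c1 * (l1 * f1 w) + c2 * (l2 * f2 w) + c3 * (l3 * f3 w) + c4 * (l4 * f4 w));
    [ring|].
  rewrite <- S1, <- S2, <- S3, <- S4, <- (Cmult_0_l (h w)), <- (Hc (w + s)). ring.
Qed.

Lemma combination_eq0_rotate (c1 c2 c3 c4 : C) :
  combination_eq0 c1 c2 c3 c4 -> combination_eq0 (c1 * e1) (c2 * e2) (c3 * e3) (c4 * e4).
Proof.
  destruct hf1 as [_ T1], hf2 as [_ T2], hf3 as [_ T3], hf4 as [_ T4].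
  intros Hc w. rewrite <- (Hc (w + t)), T1, T2, T3, T4. ring.
Qed.

Lemma combination_eq0_annihilate (c1 c2 c3 c4 l e : C) :
  combination_eq0 c1 c2 c3 c4 ->
  combination_eq0 (c1 * annihilator l1 e1 l e) (c2 * annihilator l2 e2 l e)
    (c3 * annihilator l3 e3 l e) (c4 * annihilator l4 e4 l e).
Proof.
  intros Hc w.
  pose proof (combination_eq0_rotate _ _ _ _ (combination_eq0_shift _ _ _ _ Hc) w) as HST.
  pose proof (combination_eq0_shift _ _ _ _ Hc w) as HS.
  pose proof (combination_eq0_rotate _ _ _ _ Hc w) as HT.
  pose proof (Hc w) as H0.
  unfold annihilator.
  transitivity ((c1 * l1 * e1 * f1 w + c2 * l2 * e2 * f2 w
                  + c3 * l3 * e3 * f3 w + c4 * l4 * e4 * f4 w)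
    + e * (c1 * l1 * f1 w + c2 * l2 * f2 w + c3 * l3 * f3 w + c4 * l4 * f4 w)
    + (1 - l) * (c1 * e1 * f1 w + c2 * e2 * f2 w + c3 * e3 * f3 w + c4 * e4 * f4 w)
    - (l + 1) * e * (c1 * f1 w + c2 * f2 w + c3 * f3 w + c4 * f4 w)); [ring|].
  rewrite HST, HS, HT, H0. ring.
Qed.

Lemma joint_eigen_first_eq0 :
  (forall w, f1 w + f2 w + f3 w + f4 w = 0) ->
  annihilator l1 e1 l2 e2 <> 0 -> annihilator l1 e1 l3 e3 <> 0 -> annihilator l1 e1 l4 e4 <> 0 ->
  forall w, f1 w = 0.
Proof.
  intros Hsum P2 P3 P4 w.
  assert (H1 : combination_eq0 1 1 1 1) by (intro w'; rewrite <- (Hsum w'); ring).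
  pose proof (combination_eq0_annihilate _ _ _ _ l4 e4
               (combination_eq0_annihilate _ _ _ _ l3 e3
                 (combination_eq0_annihilate _ _ _ _ l2 e2 H1)) w) as H.
  rewrite !annihilator_self in H.
  apply (Cmult_reg_r _ _
           (annihilator l1 e1 l2 e2 * annihilator l1 e1 l3 e3 * annihilator l1 e1 l4 e4)).
  - repeat apply Cmult_neq_0; assumption.
  - rewrite Cmult_0_l, <- H. ring.
Qed.

End JointEigenfunctions.

Lemma joint_eigen_sum_eq0 (s t : C) (h f1 f2 f3 f4 : C -> C) (l1 l2 l3 l4 : C)
    (b1 b2 b3 b4 : bool) :
  joint_eigen s t h l1 (sign b1) f1 -> joint_eigen s t h l2 (sign b2) f2 ->
  joint_eigen s t h l3 (sign b3) f3 -> joint_eigen s t h l4 (sign b4) f4 ->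
  (l1, sign b1) <> (l2, sign b2) -> (l1, sign b1) <> (l3, sign b3) ->
  (l1, sign b1) <> (l4, sign b4) -> (l2, sign b2) <> (l3, sign b3) ->
  (l2, sign b2) <> (l4, sign b4) -> (l3, sign b3) <> (l4, sign b4) ->
  (forall w, f1 w + f2 w + f3 w + f4 w = 0) ->
  forall w, f1 w = 0 /\ f2 w = 0 /\ f3 w = 0 /\ f4 w = 0.
Proof.
  intros hf1 hf2 hf3 hf4 D12 D13 D14 D23 D24 D34 Hsum w.
  repeat split.
  - apply (joint_eigen_first_eq0 s t h f1 f2 f3 f4 _ _ _ _ _ _ _ _ hf1 hf2 hf3 hf4);
      auto using annihilator_neq0.
  - apply (joint_eigen_first_eq0 s t h f2 f1 f3 f4 _ _ _ _ _ _ _ _ hf2 hf1 hf3 hf4);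
      auto using annihilator_neq0, not_eq_sym.
    intro w'; rewrite <- (Hsum w'); ring.
  - apply (joint_eigen_first_eq0 s t h f3 f1 f2 f4 _ _ _ _ _ _ _ _ hf3 hf1 hf2 hf4);
      auto using annihilator_neq0, not_eq_sym.
    intro w'; rewrite <- (Hsum w'); ring.
  - apply (joint_eigen_first_eq0 s t h f4 f1 f2 f3 _ _ _ _ _ _ _ _ hf4 hf1 hf2 hf3);
      auto using annihilator_neq0, not_eq_sym.
    intro w'; rewrite <- (Hsum w'); ring.
Qed.

Section ThetaTerm.

Variables (tau a : C).
Hypothesis hq : (Cmod (qpow tau 1) < 1)%R.
Hypothesis ha : a <> 0.

Definition theta_term (E : C) (j : Z) (b : bool) (nu : R) (w : C) : C :=
  E * Cexp (RtoC (IZR j / 2) * w) * theta (qpow tau 1) (sign b * qpow tau nu * a * Cexp w).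

Definition theta_term_mult (j : Z) (b : bool) (nu : R) : C :=
  - qpow tau (IZR j / 2) / (sign b * qpow tau nu * a).

Lemma theta_coef_neq0 b nu : sign b * qpow tau nu * a <> 0.
Proof.
  apply Cmult_neq_0; [apply Cmult_neq_0|]; auto using sign_neq0, qpow_neq0.
Qed.

Lemma theta_term_shift E j b nu w :
  theta_term E j b nu (w + qlog tau) * Cexp w = theta_term_mult j b nu * theta_term E j b nu w.
Proof.
  unfold theta_term, theta_term_mult.
  pose proof (theta_coef_neq0 b nu) as hc.
  set (c := sign b * qpow tau nu * a) in *.
  replace (RtoC (IZR j / 2) * (w + qlog tau))
    with (RtoC (IZR j / 2) * w + RtoC (IZR j / 2) * qlog tau) by ring.
  rewrite !Cexp_add, <- qpow_Cexp, <- qpow_one.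
  replace (c * (Cexp w * qpow tau 1)) with (qpow tau 1 * (c * Cexp w)) by ring.
  rewrite theta_mul_q; [|exact hq|apply qpow_neq0|apply Cmult_neq_0; [exact hc|apply Cexp_neq0]].
  field. split; [exact hc|apply Cexp_neq0].
Qed.

Lemma theta_term_rotate E j b nu w :
  theta_term E j b nu (w + Ci2PI) = sign (Z.even j) * theta_term E j b nu w.
Proof.
  unfold theta_term.
  replace (RtoC (IZR j / 2) * (w + Ci2PI))
    with (RtoC (IZR j / 2) * w + RtoC (IZR j / 2) * Ci2PI) by ring.
  rewrite Cexp_add, Cexp_half_int_2PI_i, Cexp_add_2PI_i. ring.
Qed.

(* On the annulus [|q| < |y| < 1] the theta function has no zero. *)
Lemma theta_term_eq0 E j b nu : (forall w, theta_term E j b nu w = 0) -> E = 0.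
Proof.
  intro H. pose proof (theta_coef_neq0 b nu) as hc.
  set (c := sign b * qpow tau nu * a) in *.
  set (rq := Cmod (qpow tau 1)) in *.
  assert (hrq : (0 <= rq)%R) by apply Cmod_ge_0.
  assert (hcm : (0 < Cmod c)%R).
  { destruct (Cmod_ge_0 c) as [|Hc]; [assumption|].
    symmetry in Hc; apply Cmod_eq_0 in Hc; contradiction. }
  set (w0 := RtoC (ln ((1 + rq) / 2 / Cmod c))).
  assert (Hm : Cmod (c * Cexp w0) = ((1 + rq) / 2)%R).
  { rewrite Cmod_mult, Cmod_Cexp. unfold w0; simpl.
    rewrite exp_ln by (apply Rdiv_lt_0_compat; lra). field. lra. }
  assert (Ht : theta (qpow tau 1) (c * Cexp w0) <> 0)
    by (apply theta_neq0; fold rq; lra).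
  specialize (H w0). unfold theta_term in H. fold c in H.
  apply (Cmult_reg_r _ 0 (Cexp (RtoC (IZR j / 2) * w0) * theta (qpow tau 1) (c * Cexp w0))).
  - apply Cmult_neq_0; [apply Cexp_neq0|exact Ht].
  - rewrite Cmult_assoc, H. ring.
Qed.

Lemma theta_term_mult_inj j b nu j' b' nu' :
  theta_term_mult j b nu = theta_term_mult j' b' nu' -> Z.even j = Z.even j' ->
  b = b' /\ exists z : Z, (nu - nu' = IZR z)%R.
Proof.
  unfold theta_term_mult. intros E Ej.
  assert (E' : sign b' * qpow tau (IZR j / 2 + nu') = sign b * qpow tau (IZR j' / 2 + nu)).
  { apply (Cmult_reg_r _ _ a ha). rewrite !qpow_add.
    transitivity (- qpow tau (IZR j / 2) / (sign b * qpow tau nu * a)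
                  * - (sign b * qpow tau nu * a) * (sign b' * qpow tau nu' * a)).
    - unfold Cdiv. field. auto using sign_neq0, qpow_neq0.
    - rewrite E. unfold Cdiv. field. auto using sign_neq0, qpow_neq0. }
  apply qpow_signed_inj in E' as [-> Enu]; [|exact hq]. split; [reflexivity|].
  assert (Hev : Z.Even (j - j'))
    by (apply Z.even_spec; rewrite Z.even_sub, Ej; apply Bool.eqb_reflx).
  destruct Hev as [z Hz]. exists z.
  apply (f_equal IZR) in Hz. rewrite minus_IZR, mult_IZR in Hz. lra.
Qed.

Definition sign_qclass_neq (b : bool) (nu : R) (b' : bool) (nu' : R) : Prop :=
  b <> b' \/ forall z : Z, (nu - nu')%R <> IZR z.

Lemma theta_term_chars_neq j b nu j' b' nu' :
  sign_qclass_neq b nu b' nu' ->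
  (theta_term_mult j b nu, sign (Z.even j)) <> (theta_term_mult j' b' nu', sign (Z.even j')).
Proof.
  intros H E. apply pair_equal_spec in E as [Em Es]. apply sign_inj in Es.
  destruct (theta_term_mult_inj _ _ _ _ _ _ Em Es) as [Hb [z Hz]].
  destruct H as [H|H]; [exact (H Hb)|exact (H z Hz)].
Qed.

End ThetaTerm.

Lemma theta_terms_coef_eq0 (tau a E1 E2 E3 E4 : C) (j1 j2 j3 j4 : Z) (b1 b2 b3 b4 : bool)
    (nu1 nu2 nu3 nu4 : R) :
  (Cmod (qpow tau 1) < 1)%R -> a <> 0 ->
  sign_qclass_neq b1 nu1 b2 nu2 -> sign_qclass_neq b1 nu1 b3 nu3 ->
  sign_qclass_neq b1 nu1 b4 nu4 -> sign_qclass_neq b2 nu2 b3 nu3 ->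
  sign_qclass_neq b2 nu2 b4 nu4 -> sign_qclass_neq b3 nu3 b4 nu4 ->
  (forall w, theta_term tau a E1 j1 b1 nu1 w + theta_term tau a E2 j2 b2 nu2 w
             + theta_term tau a E3 j3 b3 nu3 w + theta_term tau a E4 j4 b4 nu4 w = 0) ->
  E1 = 0 /\ E2 = 0 /\ E3 = 0 /\ E4 = 0.
Proof.
  intros hq ha P12 P13 P14 P23 P24 P34 Hsum.
  assert (Heigen : forall E j b nu, joint_eigen (qlog tau) Ci2PI Cexp
            (theta_term_mult tau a j b nu) (sign (Z.even j)) (theta_term tau a E j b nu))
    by (split; intro w; [apply theta_term_shift|apply theta_term_rotate]; assumption).
  enough (Hz : forall w, theta_term tau a E1 j1 b1 nu1 w = 0 /\ theta_term tau a E2 j2 b2 nu2 w = 0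
                /\ theta_term tau a E3 j3 b3 nu3 w = 0 /\ theta_term tau a E4 j4 b4 nu4 w = 0)
    by (repeat split; eapply (theta_term_eq0 tau a hq ha); intro w; apply Hz).
  eapply joint_eigen_sum_eq0; eauto using theta_term_chars_neq.
Qed.

Lemma IZR_sub_half_neq_IZR (x y z : Z) : (IZR x - (IZR y + / 2))%R <> IZR z.
Proof.
  intro H. assert (H2 : IZR (2 * (x - y - z)) = 1%R) by (rewrite mult_IZR, !minus_IZR; lra).
  apply eq_IZR in H2. lia.
Qed.

Theorem mainTheorem3 (tau a b c A B C0 D : C) (n m l k N M L K : Z)
  (hq : (0 < Cmod (qpow tau 1) < 1)%R)
  (ha : a <> 0) (hb : b <> 0) (hc : c <> 0)
  (hna : ~ in_qZ tau a 1) (hnb : ~ in_qZ tau b 1) (hnc : ~ in_qZ tau c 1)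
  (hnab : ~ in_qZ tau (a / b) 1) (hnac : ~ in_qZ tau (a / c) 1)
  (hnbc : ~ in_qZ tau (b / c) 1)
  (hsets : forall x : C,
      (in_qZ tau x a \/ in_qZ tau x b \/ in_qZ tau x (a * qpow tau 1 / c)
       \/ in_qZ tau x (b * qpow tau 1 / c))
      <->
      (in_qZ tau x a \/ in_qZ tau x (- a) \/ in_qZhalf tau x a
       \/ in_qZhalf tau x (- a)))
  (hid : forall w : C,
      A * Cexp (RtoC (IZR n / 2) * w)
          * theta (qpow tau 1) (qpow tau (IZR N) * a * Cexp w)
      + B * Cexp (RtoC (IZR m / 2) * w)
          * theta (qpow tau 1) (- (qpow tau (IZR M) * a * Cexp w))
      + C0 * Cexp (RtoC (IZR l / 2) * w)
          * theta (qpow tau 1) (qpow tau (IZR L) * qpow tau (/2) * a * Cexp w)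
      + D * Cexp (RtoC (IZR k / 2) * w)
          * theta (qpow tau 1) (- (qpow tau (IZR K) * qpow tau (/2) * a * Cexp w))
      = 0) :
  A = 0 /\ B = 0 /\ C0 = 0 /\ D = 0.
Proof.
  apply (theta_terms_coef_eq0 tau a A B C0 D n m l k true false true false
           (IZR N) (IZR M) (IZR L + / 2) (IZR K + / 2)).
  - exact (proj2 hq).
  - exact ha.
  - left; discriminate.
  - right; apply IZR_sub_half_neq_IZR.
  - left; discriminate.
  - left; discriminate.
  - right; apply IZR_sub_half_neq_IZR.
  - left; discriminate.
  - intro w. rewrite <- (hid w). unfold theta_term, sign. rewrite !qpow_add.
    f_equal; [f_equal; [f_equal|]|]; do 2 f_equal; ring.
Qed.
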